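(* Let $p>1$, $\alpha\in\mathbb{R}$, $K_1>0$. There exists $C(K_1)>0$ such that for all $|z|\le K_1$ and all $s\ge1$, $$\left|h(s)|z|^{p-1}z\frac{\ln^\alpha(\psi_1^2(s)z^2+2)}{\ln^\alpha(\psi_1^2(s)+2)}-\frac{|z|^{p-1}z}{p-1}\right|\le\frac{C(K_1)}{s}.$$
   Context: For $\tau>0$ let $\Psi(\tau)>0$ be the unique number with $\int_{\Psi(\tau)}^\infty\frac{dx}{x^p\ln^\alpha(x^2+2)}=\tau$ (equivalently, for $T>0$, $\psi(t)=\Psi(T-t)$ is the positive solution of $\psi'=\psi^p\ln^\alpha(\psi^2+2)$ with $\psi\to+\infty$ as $t\to T$); $\psi_1(s)=\Psi(e^{-s})$ and $h(s)=e^{-s}\psi_1^{p-1}(s)\ln^\alpha(\psi_1^2(s)+2)$. *)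

From Stdlib Require Import Reals ClassicalEpsilon.
From Coquelicot Require Import Coquelicot.
Open Scope R_scope.

Definition integrand (p alpha : R) (x : R) : R :=
  / (Rpower x p * Rpower (ln (x ^ 2 + 2)) alpha).

Definition Psi (p alpha tau : R) : R :=
  epsilon (inhabits 0)
    (fun y => 0 < y /\
       is_RInt_gen (integrand p alpha) (at_point y) (Rbar_locally p_infty) tau).

Definition psi1 (p alpha s : R) : R := Psi p alpha (exp (- s)).

Definition hfun (p alpha s : R) : R :=
  exp (- s) * Rpower (psi1 p alpha s) (p - 1)
    * Rpower (ln (psi1 p alpha s ^ 2 + 2)) alpha.

From Stdlib Require Import Reals Lra ClassicalEpsilon.
From Coquelicot Require Import Coquelicot.
Open Scope R_scope.

(* Let f be the integrand, u = ell (psi1 s) = ln (psi1(s)^2 + 2) and F(x) = x^(1-p) ell(x)^(-alpha).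
   Then F' = -((p - 1) + alpha e) f where the elasticity e of ell satisfies 0 <= e(x) <= 2 / ell x,
   so integrating over [psi1 s, oo), where f has integral exp(-s), and using
   h(s) = exp(-s) / F(psi1 s) gives |(p - 1) h - 1| <= (2 |alpha| / u) h.  Hence h is bounded,
   h = 1/(p-1) + O(1/u), and the lower bound on h = exp(-s + (p-1) ln psi1 + alpha ln u) forces
   s = O(u).  It remains to see that |z|^p |(v/u)^alpha - 1| = O(1/u) for |z| <= K1, where
   v = ell (psi1 |z|): while |z|^4 >= exp(-u) one has |ln v - ln u| = O((1 + |ln |z||) / u), and
   below that the factor |z|^p <= exp(-p u/4) beats the polynomial growth of (v/u)^alpha.
   As Psi is defined by choice, one also shows that the tail integral of f takes every positive
   value: it is continuous, tends to 0 at infinity (F' ~ -(p - 1) f makes the integral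
   converge) and is large near 0. *)

(** * Elementary inequalities *)

Lemma exp_le_exp_of_le x y : x <= y -> exp x <= exp y.
Proof. intros [Hlt | ->]; [now left; apply exp_increasing | apply Rle_refl]. Qed.

Lemma ln_le_sub_1 x : 0 < x -> ln x <= x - 1.
Proof.
  intros Hx. pose proof (exp_ineq1_le (ln x)) as H. rewrite exp_ln in H; lra.
Qed.

Lemma ln_sub_ln_le x y : 0 < x -> 0 < y -> ln y - ln x <= (y - x) / x.
Proof.
  intros Hx Hy. rewrite <- ln_div by lra.
  replace ((y - x) / x) with (y / x - 1) by (field; lra).
  apply ln_le_sub_1, Rdiv_lt_0_compat; lra.
Qed.

Lemma ln_ge_m1 u : / 2 <= u -> -1 <= ln u.
Proof.
  intros Hu. pose proof (ln_sub_ln_le u 1 ltac:(lra) ltac:(lra)) as H.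
  rewrite ln_1 in H. replace ((1 - u) / u) with (/ u - 1) in H by (field; lra).
  assert (/ u <= 2) by (rewrite <- (Rinv_inv 2); apply Rinv_le_contravar; lra).
  lra.
Qed.

Lemma ln_le_lin d u : 0 < d -> 0 < u -> ln u <= d * u - ln d - 1.
Proof.
  intros Hd Hu. pose proof (ln_le_sub_1 (d * u) ltac:(nra)) as H.
  rewrite ln_mult in H by lra. lra.
Qed.

Lemma Rabs_ln_le_lin d u : 0 < d -> / 2 <= u -> Rabs (ln u) <= d * u + (Rabs (ln d) + 1).
Proof.
  intros Hd Hu.
  pose proof (ln_le_lin d u Hd ltac:(lra)). pose proof (ln_ge_m1 u Hu).
  pose proof (Rle_abs (- ln d)). rewrite Rabs_Ropp in *.
  apply Rabs_le; nra.
Qed.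

Lemma mul_exp_neg_le_1 t : t * exp (- t) <= 1.
Proof.
  rewrite exp_Ropp. pose proof (exp_pos t). pose proof (exp_ineq1_le t).
  apply (Rmult_le_reg_r (exp t)); [lra|]. field_simplify; lra.
Qed.

Lemma Rabs_exp_sub_1_le t : Rabs (exp t - 1) <= Rabs t * exp (Rabs t).
Proof.
  pose proof (exp_ineq1_le t). pose proof (exp_ineq1_le (- t)).
  pose proof (exp_pos t). pose proof (exp_pos (- t)).
  assert (Hinv : exp t * exp (- t) = 1) by (rewrite <- exp_plus, Rplus_opp_r; apply exp_0).
  assert ((exp (- t) - (1 - t)) * exp t >= 0) by (apply Rle_ge, Rmult_le_pos; lra).
  assert ((exp t - (1 + t)) * exp (- t) >= 0) by (apply Rle_ge, Rmult_le_pos; lra).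
  destruct (Rle_or_lt 0 t) as [Ht | Ht].
  - rewrite (Rabs_pos_eq t), Rabs_pos_eq by lra. nra.
  - assert (exp t <= 1) by (rewrite <- exp_0; apply exp_le_exp_of_le; lra).
    rewrite (Rabs_left t), Rabs_left1 by lra. nra.
Qed.

Lemma Rabs_exp_mul_sub_1_le a r rho rho0 : Rabs r <= rho -> rho <= rho0 ->
  Rabs (exp (a * r) - 1) <= Rabs a * rho * exp (Rabs a * rho0).
Proof.
  intros Hr Hrho. eapply Rle_trans; [apply Rabs_exp_sub_1_le|].
  rewrite Rabs_mult. pose proof (Rabs_pos a). pose proof (Rabs_pos r).
  apply Rmult_le_compat; [nra | apply Rlt_le, exp_pos | nra |].
  apply exp_le_exp_of_le. nra.
Qed.

Lemma Rabs_exp_sub_1_le_exp_abs x : Rabs (exp x - 1) <= exp (Rabs x) + 1.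
Proof.
  eapply Rle_trans; [apply Rabs_triang|].
  rewrite Rabs_Ropp, Rabs_R1, Rabs_pos_eq by (apply Rlt_le, exp_pos).
  apply Rplus_le_compat_r, exp_le_exp_of_le, Rle_abs.
Qed.

Lemma Rpower_mul_neg_ln_le t p : 0 < p -> 0 < t -> Rpower t p * - ln t <= / p.
Proof.
  intros Hp Ht. pose proof (mul_exp_neg_le_1 (- (p * ln t))) as H.
  rewrite Ropp_involutive in H. unfold Rpower.
  apply (Rmult_le_reg_l p); [lra|]. rewrite Rinv_r by lra. nra.
Qed.

Lemma Rpower_mul_sub_ln_le t p c k : 0 < p -> 0 <= c -> 0 <= k -> 0 < t < 1 ->
  Rpower t p * (c - k * ln t) <= c + k / p.
Proof.
  intros Hp Hc Hk Ht.
  assert (Rpower t p <= 1).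
  { unfold Rpower. rewrite <- exp_0. apply exp_le_exp_of_le.
    assert (ln t < 0) by (rewrite <- ln_1; apply ln_increasing; lra). nra. }
  pose proof (Rpower_mul_neg_ln_le t p Hp ltac:(lra)).
  assert (Rpower t p * c <= c) by (rewrite <- (Rmult_1_l c) at 2; apply Rmult_le_compat_r; lra).
  assert (k * (Rpower t p * - ln t) <= k * / p) by (apply Rmult_le_compat_l; lra).
  replace (Rpower t p * (c - k * ln t)) with (Rpower t p * c + k * (Rpower t p * - ln t)) by ring.
  unfold Rdiv. lra.
Qed.

Lemma Rpower_div_Rpower x y c : Rpower y c / Rpower x c = exp (c * (ln y - ln x)).
Proof. unfold Rpower, Rdiv. rewrite <- exp_Ropp, <- exp_plus. f_equal. ring. Qed.

Lemma Rabs_Rpower_abs_mul z q : z <> 0 -> Rabs (Rpower (Rabs z) (q - 1) * z) = Rpower (Rabs z) q.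
Proof.
  intros Hz. pose proof (Rabs_pos_lt z Hz).
  rewrite Rabs_mult, (Rabs_pos_eq (Rpower _ _)) by (apply Rlt_le, exp_pos).
  rewrite <- (Rpower_1 (Rabs z)) at 2 by lra. rewrite <- Rpower_plus. f_equal. ring.
Qed.

Lemma Rabs_mul_ratio_sub_le h q w r : 0 < q ->
  Rabs (h * w * r - w / q)
  <= Rabs (h - / q) * (Rabs w + Rabs w * Rabs (r - 1)) + Rabs w * Rabs (r - 1) / q.
Proof.
  intros Hq.
  replace (h * w * r - w / q) with ((h - / q) * (w * r) + w * (r - 1) / q) by (field; lra).
  eapply Rle_trans; [apply Rabs_triang|]. apply Rplus_le_compat.
  - rewrite Rabs_mult. apply Rmult_le_compat_l; [apply Rabs_pos|].
    assert (Rabs r <= 1 + Rabs (r - 1)).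
    { replace r with ((r - 1) + 1) at 1 by ring.
      eapply Rle_trans; [apply Rabs_triang|]. rewrite Rabs_R1. lra. }
    rewrite Rabs_mult. pose proof (Rabs_pos w). nra.
  - unfold Rdiv. rewrite !Rabs_mult, (Rabs_pos_eq (/ q)) by (apply Rlt_le, Rinv_0_lt_compat; lra).
    apply Rle_refl.
Qed.

Lemma error_weight_le p a u : 1 < p -> 0 < u -> 4 * Rabs a / (p - 1) <= u ->
  2 * Rabs a / u <= (p - 1) / 2.
Proof.
  intros Hp Hu H.
  assert (H4 : 4 * Rabs a <= (p - 1) * u).
  { replace (4 * Rabs a) with ((p - 1) * (4 * Rabs a / (p - 1))) by (field; lra).
    apply Rmult_le_compat_l; lra. }
  apply (Rmult_le_reg_r (2 * u)); [lra|].
  replace (2 * Rabs a / u * (2 * u)) with (4 * Rabs a) by (field; lra). lra.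
Qed.

(** * Improper integrals and monotone limits *)

Lemma is_RInt_gen_derive_at_infty (f F : R -> R) (y l : R) :
  (forall x, y <= x -> is_derive F x (f x)) ->
  (forall x, y <= x -> continuous f x) ->
  filterlim F (Rbar_locally p_infty) (locally l) ->
  is_RInt_gen f (at_point y) (Rbar_locally p_infty) (l - F y).
Proof.
  intros HF Hf Hl P HP.
  assert (Hlim : filterlim (fun b => F b - F y) (Rbar_locally p_infty) (locally (l - F y))).
  { apply (filterlim_comp _ _ _ F (fun x => x - F y) _ (locally l)); [exact Hl|].
    apply (continuous_minus (fun x => x) (fun _ => F y));
      [apply continuous_id | apply continuous_const]. }
  destruct (Hlim P HP) as [M HM].
  apply (Filter_prod _ _ _ (fun a => a = y) (fun b => Rmax M y < b)).
  - reflexivity.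
  - exists (Rmax M y). tauto.
  - intros a b -> Hb. exists (F b - F y). split.
    + apply (is_RInt_derive (V := R_CompleteNormedModule));
        intros x Hx; rewrite Rmin_left, Rmax_right in Hx by (pose proof (Rmax_r M y); lra);
        [apply HF | apply Hf]; lra.
    + apply HM. pose proof (Rmax_l M y). lra.
Qed.

Lemma filter_prod_at_point_infty (y : R) (P : R * R -> Prop) :
  (forall b, y < b -> P (y, b)) -> filter_prod (at_point y) (Rbar_locally p_infty) P.
Proof.
  intros HP. apply (Filter_prod _ _ _ (fun a => a = y) (fun b => y < b)).
  - reflexivity.
  - exists y. tauto.
  - intros a b -> Hb. now apply HP.
Qed.

Lemma incr_bounded_cvg (g : R -> R) (x0 M : R) :
  (forall x y, x0 < x <= y -> g x <= g y) -> (forall x, x0 < x -> g x <= M) ->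
  exists L, (forall x, x0 < x -> g x <= L) /\ filterlim g (Rbar_locally p_infty) (locally L).
Proof.
  intros Hmono Hbnd.
  destruct (completeness (fun v => exists x, x0 < x /\ v = g x)) as [L [HL1 HL2]].
  - exists M. intros v [x [Hx ->]]. now apply Hbnd.
  - exists (g (x0 + 1)), (x0 + 1). split; [lra | reflexivity].
  - assert (Hup : forall x, x0 < x -> g x <= L) by (intros x Hx; apply HL1; exists x; auto).
    exists L. split; [exact Hup|].
    apply filterlim_locally. intros eps.
    destruct (classic (exists x, x0 < x /\ L - eps < g x)) as [[x1 [Hx1 Hgx1]] | Hno].
    + exists x1. intros x Hx. change (Rabs (g x - L) < eps).
      pose proof (Hmono x1 x ltac:(lra)). pose proof (Hup x ltac:(lra)).
      rewrite Rabs_left1 by lra. lra.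
    + exfalso. assert (L <= L - eps).
      { apply HL2. intros v [x [Hx ->]]. apply Rnot_lt_le. intros Hlt. apply Hno. now exists x. }
      pose proof (cond_pos eps). lra.
Qed.

(** * The logarithmic weight *)

Definition ell (x : R) : R := ln (x ^ 2 + 2).

Lemma ell_ge_ln2 x : ln 2 <= ell x.
Proof. apply ln_le; nra. Qed.

Lemma ell_ge_half x : / 2 <= ell x.
Proof. pose proof (ell_ge_ln2 x). pose proof ln_lt_2. lra. Qed.

Lemma ell_pos x : 0 < ell x.
Proof. pose proof (ell_ge_half x). lra. Qed.

Lemma ell_le_ell x y : 0 <= x <= y -> ell x <= ell y.
Proof. intros Hxy. apply ln_le; nra. Qed.

Lemma two_ln_le_ell x : 0 < x -> 2 * ln x <= ell x.
Proof.
  intros Hx. replace (2 * ln x) with (ln (x ^ 2)) by (rewrite ln_pow by lra; simpl; ring).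
  apply ln_le; nra.
Qed.

Lemma ell_mul_le l t : 1 <= t -> ell (l * t) <= ell l + 2 * ln t.
Proof.
  intros Ht. unfold ell.
  replace (ln (l ^ 2 + 2) + 2 * ln t) with (ln ((l ^ 2 + 2) * t ^ 2))
    by (rewrite ln_mult, ln_pow by nra; simpl; ring).
  apply ln_le; nra.
Qed.

Lemma ell_mul_ge l t : 0 < t <= 1 -> ell l + 2 * ln t <= ell (l * t).
Proof.
  intros Ht. unfold ell.
  replace (ln (l ^ 2 + 2) + 2 * ln t) with (ln ((l ^ 2 + 2) * t ^ 2))
    by (rewrite ln_mult, ln_pow by nra; simpl; ring).
  apply ln_le; nra.
Qed.

Lemma ell_mul_le_add l t K : 1 <= K -> 0 < l -> 0 < t <= K -> ell (l * t) <= ell l + 2 * ln K.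
Proof.
  intros HK Hl Ht. destruct (Rle_or_lt 1 t) as [Ht1 | Ht1].
  - pose proof (ell_mul_le l t Ht1). pose proof (ln_le t K ltac:(lra) (proj2 Ht)). lra.
  - assert (0 <= ln K) by (rewrite <- ln_1; apply ln_le; lra).
    pose proof (ell_le_ell (l * t) l ltac:(nra)). lra.
Qed.

Lemma ln_sq_mul_sq_add_2 l z : ln (l ^ 2 * z ^ 2 + 2) = ell (l * Rabs z).
Proof. unfold ell. now rewrite Rpow_mult_distr, pow2_abs. Qed.

Definition ell_elasticity (x : R) : R := 2 * x ^ 2 / ((x ^ 2 + 2) * ell x).

Lemma ell_elasticity_bounds x : 0 <= ell_elasticity x <= 2 / ell x.
Proof.
  pose proof (ell_pos x). unfold ell_elasticity. split.
  - apply Rdiv_le_0_compat; [nra | apply Rmult_lt_0_compat; nra].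
  - apply (Rmult_le_reg_r ((x ^ 2 + 2) * ell x)); [nra|].
    field_simplify; nra.
Qed.

(** * The tail integral of the integrand *)

Section Integrand.

Variables p a : R.

Local Notation f := (integrand p a).

Lemma integrand_eq x : f x = exp (- (p * ln x) - a * ln (ell x)).
Proof. unfold integrand, Rpower, Rminus. rewrite exp_plus, !exp_Ropp, Rinv_mult. reflexivity. Qed.

Lemma integrand_pos x : 0 < f x.
Proof. rewrite integrand_eq. apply exp_pos. Qed.

Lemma integrand_continuous x : 0 < x -> continuous f x.
Proof.
  intros Hx. apply (continuous_ext _ _ _ (fun y => eq_sym (integrand_eq y))).
  apply (ex_derive_continuous (V := R_NormedModule)).
  pose proof (ell_pos x). unfold ell in *. simpl in *.
  auto_derive. repeat split; nra.
Qed.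

Lemma ex_RInt_integrand x y : 0 < x -> 0 < y -> ex_RInt f x y.
Proof.
  intros Hx Hy. apply (ex_RInt_continuous (V := R_CompleteNormedModule)).
  intros z Hz. apply integrand_continuous.
  apply Rlt_le_trans with (Rmin x y); [apply Rmin_glb_lt|]; lra.
Qed.

(* [x^(1-p) ell(x)^(-a)], whose derivative is [-(p - 1) f] up to the relative error
   [a * ell_elasticity]. *)
Definition tail_approx (x : R) : R := exp ((1 - p) * ln x - a * ln (ell x)).

Definition tail_approx_deriv (x : R) : R := - f x * ((p - 1) + a * ell_elasticity x).

Lemma is_derive_tail_approx x : 0 < x -> is_derive tail_approx x (tail_approx_deriv x).
Proof.
  intros Hx. pose proof (ell_pos x).
  unfold tail_approx, tail_approx_deriv, ell_elasticity. rewrite integrand_eq.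
  unfold ell in *. auto_derive; [simpl in *; repeat split; nra|].
  replace (x * (x * 1)) with (x ^ 2) by ring.
  replace ((1 - p) * ln x + - (a * ln (ln (x ^ 2 + 2))))
    with (ln x + (- (p * ln x) - a * ln (ln (x ^ 2 + 2)))) by ring.
  rewrite exp_plus, exp_ln by lra. field. repeat split; nra.
Qed.

Lemma continuous_tail_approx_deriv x : 0 < x -> continuous tail_approx_deriv x.
Proof.
  intros Hx.
  apply (continuous_ext
           (fun y => - exp (- (p * ln y) - a * ln (ell y)) * (p - 1 + a * ell_elasticity y))).
  { intros y. unfold tail_approx_deriv. now rewrite integrand_eq. }
  apply (ex_derive_continuous (V := R_NormedModule)).
  pose proof (ell_pos x). unfold ell_elasticity, ell in *. simpl in *.
  auto_derive. repeat split; nra.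
Qed.

Lemma tail_approx_pos x : 0 < tail_approx x.
Proof. apply exp_pos. Qed.

Lemma tail_approx_deriv_error y x : 0 < y <= x ->
  Rabs ((p - 1) * f x + tail_approx_deriv x) <= 2 * Rabs a / ell y * f x.
Proof.
  intros Hyx. unfold tail_approx_deriv.
  pose proof (integrand_pos x) as Hf. pose proof (ell_elasticity_bounds x) as [Hg0 Hg].
  pose proof (ell_pos y). pose proof (ell_le_ell y x ltac:(lra)).
  assert (Hgy : ell_elasticity x <= 2 / ell y).
  { apply Rle_trans with (2 / ell x); [exact Hg|].
    apply Rmult_le_compat_l; [lra | apply Rinv_le_contravar; lra]. }
  replace ((p - 1) * f x + - f x * (p - 1 + a * ell_elasticity x))
    with (- (a * (f x * ell_elasticity x))) by ring.
  rewrite Rabs_Ropp, Rabs_mult, (Rabs_pos_eq (_ * _)) by nra.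
  replace (2 * Rabs a / ell y * f x) with (Rabs a * (f x * (2 / ell y))) by (field; lra).
  apply Rmult_le_compat_l; [apply Rabs_pos | nra].
Qed.

End Integrand.

Section TailApprox.

Variables p a : R.
Hypothesis Hp : 1 < p.

Local Notation f := (integrand p a).

Lemma tail_approx_le : exists K, forall x, 1 <= x ->
  tail_approx p a x <= exp (K - (p - 1) / 2 * ln x).
Proof.
  set (d := (p - 1) / (4 * (Rabs a + 1))).
  assert (Hd : 0 < d) by (apply Rdiv_lt_0_compat; pose proof (Rabs_pos a); lra).
  assert (Had : Rabs a * d <= (p - 1) / 4).
  { unfold d. apply (Rmult_le_reg_r (4 * (Rabs a + 1))); [pose proof (Rabs_pos a); lra|].
    field_simplify; pose proof (Rabs_pos a); nra. }
  set (K := Rabs (ln d) + 1).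
  exists (Rabs a * (d * ell 1 + K)). intros x Hx.
  apply exp_le_exp_of_le.
  pose proof (Rabs_ln_le_lin d (ell x) Hd (ell_ge_half x)) as Hln.
  pose proof (ell_mul_le 1 x Hx) as Hell. rewrite Rmult_1_l in Hell.
  assert (Hlnx : 0 <= ln x) by (rewrite <- ln_1; apply ln_le; lra).
  assert (- (a * ln (ell x)) <= Rabs a * (d * ell x + K)).
  { eapply Rle_trans; [apply Rle_abs|]. rewrite Rabs_Ropp, Rabs_mult.
    apply Rmult_le_compat_l; [apply Rabs_pos | exact Hln]. }
  assert (Rabs a * d * ell x <= Rabs a * d * (ell 1 + 2 * ln x))
    by (apply Rmult_le_compat_l; [pose proof (Rabs_pos a); nra | lra]).
  assert (Rabs a * d * ln x <= (p - 1) / 4 * ln x) by (apply Rmult_le_compat_r; lra).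
  nra.
Qed.

Lemma tail_approx_cvg_0 : filterlim (tail_approx p a) (Rbar_locally p_infty) (locally 0).
Proof.
  destruct tail_approx_le as [K HK].
  apply filterlim_locally. intros eps.
  exists (Rmax 1 (exp (2 * (K - ln eps) / (p - 1)))). intros x Hx.
  pose proof (Rmax_l 1 (exp (2 * (K - ln eps) / (p - 1)))).
  pose proof (Rmax_r 1 (exp (2 * (K - ln eps) / (p - 1)))).
  change (Rabs (tail_approx p a x - 0) < eps).
  rewrite Rminus_0_r, Rabs_pos_eq by (left; apply tail_approx_pos).
  eapply Rle_lt_trans; [apply HK; lra|].
  rewrite <- (exp_ln eps) by apply cond_pos. apply exp_increasing.
  assert (2 * (K - ln eps) / (p - 1) < ln x).
  { rewrite <- (ln_exp (2 * (K - ln eps) / (p - 1))).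
    apply ln_increasing; [apply exp_pos | lra]. }
  assert ((p - 1) / 2 * (2 * (K - ln eps) / (p - 1)) < (p - 1) / 2 * ln x)
    by (apply Rmult_lt_compat_l; lra).
  replace ((p - 1) / 2 * (2 * (K - ln eps) / (p - 1))) with (K - ln eps) in * by (field; lra).
  lra.
Qed.

Lemma tail_integral_approx y I : 0 < y ->
  is_RInt_gen f (at_point y) (Rbar_locally p_infty) I ->
  Rabs ((p - 1) * I - tail_approx p a y) <= 2 * Rabs a / ell y * I.
Proof.
  intros Hy HI.
  assert (HdF : is_RInt_gen (tail_approx_deriv p a) (at_point y) (Rbar_locally p_infty)
                  (0 - tail_approx p a y)).
  { apply is_RInt_gen_derive_at_infty; [intros x Hx..| exact tail_approx_cvg_0].
    - apply is_derive_tail_approx. lra.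
    - apply continuous_tail_approx_deriv. lra. }
  pose proof (is_RInt_gen_plus _ _ _ _ (is_RInt_gen_scal _ (p - 1) _ HI) HdF) as HS.
  pose proof (is_RInt_gen_scal _ (2 * Rabs a / ell y) _ HI) as HG.
  replace ((p - 1) * I - tail_approx p a y) with ((p - 1) * I + (0 - tail_approx p a y)) by ring.
  refine (RInt_gen_norm _ _ _ _ (filter_prod_at_point_infty _ _ (fun b Hb => Rlt_le _ _ Hb))
          (filter_prod_at_point_infty _ _ _) HS HG).
  intros b Hb x Hx. simpl in Hx.
  apply (tail_approx_deriv_error p a y x). lra.
Qed.

End TailApprox.

Section TailIntegral.

Variables p a : R.
Hypothesis Hp : 1 < p.

Local Notation f := (integrand p a).

Lemma RInt_integrand_le_tail_approx Y b : 0 < Y <= b -> 4 * Rabs a / (p - 1) <= ell Y ->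
  (p - 1) / 2 * RInt f Y b <= tail_approx p a Y.
Proof.
  intros HYb HY.
  assert (Hf : is_RInt (fun x => (p - 1) / 2 * f x) Y b ((p - 1) / 2 * RInt f Y b)).
  { exact (is_RInt_scal (V := R_NormedModule) f Y b _ _
             (RInt_correct (V := R_CompleteNormedModule) f Y b
                (ex_RInt_integrand p a Y b ltac:(lra) ltac:(lra)))). }
  assert (HdF : is_RInt (fun x => opp (tail_approx_deriv p a x)) Y b
                  (minus (opp (tail_approx p a b)) (opp (tail_approx p a Y)))).
  { apply (is_RInt_derive (V := R_CompleteNormedModule) (fun x => opp (tail_approx p a x)));
      intros x Hx; rewrite Rmin_left, Rmax_right in Hx by lra.
    - exact (is_derive_opp (K := R_AbsRing) (V := R_NormedModule) _ _ _
               (is_derive_tail_approx p a x ltac:(lra))).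
    - exact (continuous_opp (V := R_NormedModule) _ _
               (continuous_tail_approx_deriv p a x ltac:(lra))). }
  pose proof (error_weight_le p a (ell Y) Hp (ell_pos Y) HY) as Hsmall.
  pose proof (is_RInt_le _ _ _ _ _ _ (proj2 HYb) Hf HdF) as Hle.
  assert (Hpt : forall x, Y < x < b -> (p - 1) / 2 * f x <= - tail_approx_deriv p a x).
  { intros x Hx. pose proof (integrand_pos p a x).
    pose proof (tail_approx_deriv_error p a Y x ltac:(lra)) as Herr.
    apply Rabs_le_between in Herr.
    assert (2 * Rabs a / ell Y * f x <= (p - 1) / 2 * f x) by (apply Rmult_le_compat_r; lra).
    lra. }
  specialize (Hle Hpt).
  change (minus (opp ?u) (opp ?v)) with (Rplus (Ropp u) (Ropp (Ropp v))) in Hle.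
  pose proof (tail_approx_pos p a b). lra.
Qed.

Definition integrand_primitive (b : R) : R := RInt f 1 b.

Local Notation Phi := integrand_primitive.

Lemma is_derive_integrand_primitive b : 0 < b -> is_derive Phi b (f b).
Proof.
  intros Hb.
  apply (is_derive_RInt (V := R_NormedModule) f Phi 1 b); [|now apply (integrand_continuous p a)].
  exists (mkposreal (b / 2) ltac:(lra)). intros x Hx.
  change (Rabs (x - b) < b / 2) in Hx. apply Rabs_lt_between in Hx.
  apply (RInt_correct (V := R_CompleteNormedModule)), ex_RInt_integrand; lra.
Qed.

Lemma integrand_primitive_sub x y : 0 < x -> 0 < y -> Phi y - Phi x = RInt f x y.
Proof.
  intros Hx Hy. unfold Phi.
  rewrite <- (RInt_Chasles (V := R_CompleteNormedModule) f 1 x y) by (apply ex_RInt_integrand; lra).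
  change (plus ?u ?v) with (Rplus u v). ring.
Qed.

Lemma integrand_primitive_le x y : 0 < x <= y -> Phi x <= Phi y.
Proof.
  intros Hxy. pose proof (integrand_primitive_sub x y ltac:(lra) ltac:(lra)).
  assert (0 <= RInt f x y).
  { apply RInt_ge_0; [lra | apply ex_RInt_integrand; lra |].
    intros z _. left. apply integrand_pos. }
  lra.
Qed.

Lemma integrand_primitive_cvg :
  exists L, (forall b, 0 < b -> Phi b <= L) /\ filterlim Phi (Rbar_locally p_infty) (locally L).
Proof.
  set (Y := exp (4 * Rabs a / (p - 1))).
  assert (HY : 0 < Y) by apply exp_pos.
  assert (HellY : 4 * Rabs a / (p - 1) <= ell Y).
  { rewrite <- (ln_exp (4 * Rabs a / (p - 1))). fold Y. apply ln_le; [lra | nra]. }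
  apply (incr_bounded_cvg Phi 0 (Phi Y + 2 / (p - 1) * tail_approx p a Y)).
  - intros x y Hxy. apply integrand_primitive_le. lra.
  - intros b Hb. pose proof (tail_approx_pos p a Y).
    assert (0 <= 2 / (p - 1) * tail_approx p a Y)
      by (apply Rmult_le_pos; [apply Rlt_le, Rdiv_lt_0_compat|]; lra).
    destruct (Rle_or_lt b Y) as [HbY | HYb].
    + pose proof (integrand_primitive_le b Y ltac:(lra)). lra.
    + pose proof (RInt_integrand_le_tail_approx Y b ltac:(lra) HellY).
      pose proof (integrand_primitive_sub Y b HY Hb).
      assert (RInt f Y b <= 2 / (p - 1) * tail_approx p a Y).
      { apply (Rmult_le_reg_l ((p - 1) / 2)); [lra|].
        replace ((p - 1) / 2 * (2 / (p - 1) * tail_approx p a Y)) with (tail_approx p a Y)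
          by (field; lra).
        lra. }
      lra.
Qed.

Lemma integrand_ge x : 0 < x <= 1 -> exp (- (p * ln x) - Rabs a) <= f x.
Proof.
  intros Hx. rewrite integrand_eq. apply exp_le_exp_of_le.
  assert (Hell : ell x <= ln 3).
  { replace (ln 3) with (ell 1) by (unfold ell; f_equal; ring). apply ell_le_ell. lra. }
  pose proof (ln_le_sub_1 3 ltac:(lra)).
  pose proof (ln_le_sub_1 (ell x) (ell_pos x)). pose proof (ln_ge_m1 (ell x) (ell_ge_half x)).
  assert (a * ln (ell x) <= Rabs a).
  { eapply Rle_trans; [apply Rle_abs|]. rewrite Rabs_mult.
    rewrite <- (Rmult_1_r (Rabs a)) at 2.
    apply Rmult_le_compat_l; [apply Rabs_pos | apply Rabs_le; lra]. }
  lra.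
Qed.

Lemma RInt_integrand_gt tau : 0 < tau -> exists y, 0 < y /\ tau < RInt f y (2 * y).
Proof.
  intros Htau.
  set (A := (Rabs (ln tau) + p * ln 2 + Rabs a) / (p - 1) + 1).
  assert (HA : 1 <= A).
  { assert (0 <= (Rabs (ln tau) + p * ln 2 + Rabs a) / (p - 1)); [|unfold A; lra].
    pose proof ln_lt_2. pose proof (Rabs_pos (ln tau)). pose proof (Rabs_pos a).
    apply Rdiv_le_0_compat; nra. }
  (* [f >= m] on [[y, 2 y]], and [y * m = exp ((p - 1) A - p ln 2 - |a|)] exceeds [tau]. *)
  set (y := exp (- A)). assert (Hy : 0 < y) by apply exp_pos.
  assert (Hy2 : 2 * y <= 1).
  { pose proof (exp_ineq1_le 1). pose proof (exp_pos 1).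
    assert (y * exp 1 <= 1).
    { unfold y. rewrite <- exp_plus, <- exp_0. apply exp_le_exp_of_le. rewrite exp_0. lra. }
    nra. }
  exists y. split; [exact Hy|].
  set (m := exp (- (p * ln (2 * y)) - Rabs a)).
  apply Rlt_le_trans with ((2 * y - y) * m).
  - replace ((2 * y - y) * m) with (exp ((p - 1) * A - p * ln 2 - Rabs a)).
    + rewrite <- (exp_ln tau) at 1 by exact Htau. apply exp_increasing.
      replace ((p - 1) * A) with (Rabs (ln tau) + p * ln 2 + Rabs a + (p - 1))
        by (unfold A; field; lra).
      pose proof (Rle_abs (ln tau)). lra.
    + unfold m, y. rewrite ln_mult, ln_exp by (try apply exp_pos; lra).
      replace (2 * exp (- A) - exp (- A)) with (exp (- A)) by ring.
      rewrite <- exp_plus. f_equal. ring.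
  - apply (is_RInt_le (fun _ => m) f y (2 * y));
      [lra | apply (is_RInt_const (V := R_NormedModule)) |
       apply (RInt_correct (V := R_CompleteNormedModule)), ex_RInt_integrand; lra |].
    intros x Hx. eapply Rle_trans; [|apply integrand_ge; lra].
    apply exp_le_exp_of_le.
    assert (ln x <= ln (2 * y)) by (apply ln_le; lra). nra.
Qed.

Lemma exists_tail_integral_eq tau : 0 < tau ->
  exists y, 0 < y /\ is_RInt_gen f (at_point y) (Rbar_locally p_infty) tau.
Proof.
  intros Htau.
  destruct integrand_primitive_cvg as [L [HL Hlim]].
  assert (Hcont : forall x, 0 < x -> continuous Phi x).
  { intros x Hx. apply (ex_derive_continuous (V := R_NormedModule)).
    exists (f x). now apply is_derive_integrand_primitive. }
  destruct (RInt_integrand_gt tau Htau) as [y1 [Hy1 Hgt]].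
  pose proof (integrand_primitive_sub y1 (2 * y1) Hy1 ltac:(lra)).
  pose proof (HL (2 * y1) ltac:(lra)).
  destruct (proj1 (filterlim_locally _ _) Hlim (mkposreal tau Htau)) as [M HM].
  set (y2 := Rmax M y1 + 1).
  assert (Hy12 : y1 < y2) by (pose proof (Rmax_r M y1); unfold y2; lra).
  assert (H2 : Rabs (Phi y2 - L) < tau) by (apply HM; pose proof (Rmax_l M y1); unfold y2; lra).
  apply Rabs_lt_between in H2.
  destruct (Ranalysis5.IVT_interv (fun y => Phi y - (L - tau)) y1 y2) as [y [Hy Hyeq]].
  all: cbv beta.
  - intros x Hx. apply continuity_pt_filterlim.
    apply (continuous_minus (V := R_NormedModule) Phi (fun _ => L - tau));
      [apply Hcont; lra | apply continuous_const].
  - exact Hy12.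
  - lra.
  - lra.
  - exists y. split; [lra|].
    replace tau with (L - Phi y) by (cbv beta in Hyeq; lra).
    apply is_RInt_gen_derive_at_infty; [intros x Hx.. | exact Hlim].
    + apply is_derive_integrand_primitive. lra.
    + apply integrand_continuous. lra.
Qed.

Lemma Psi_spec tau : 0 < tau ->
  0 < Psi p a tau /\ is_RInt_gen f (at_point (Psi p a tau)) (Rbar_locally p_infty) tau.
Proof. intros Htau. unfold Psi. apply epsilon_spec, exists_tail_integral_eq, Htau. Qed.

End TailIntegral.

(** * Asymptotics of [hfun] *)

Section Hfun.

Variables p a : R.
Hypothesis Hp : 1 < p.

Local Notation h := (hfun p a).
Local Notation u s := (ell (psi1 p a s)).

Lemma psi1_pos s : 0 < psi1 p a s.
Proof. exact (proj1 (Psi_spec p a Hp (exp (- s)) (exp_pos _))). Qed.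

Lemma hfun_pos s : 0 < h s.
Proof. unfold hfun, Rpower. rewrite <- !exp_plus. apply exp_pos. Qed.

Lemma hfun_eq s : h s = exp (- s + (p - 1) * ln (psi1 p a s) + a * ln (u s)).
Proof. unfold hfun, Rpower, ell. rewrite !exp_plus. reflexivity. Qed.

Lemma hfun_mul_tail_approx s : h s * tail_approx p a (psi1 p a s) = exp (- s).
Proof. rewrite hfun_eq. unfold tail_approx. rewrite <- exp_plus. f_equal. ring. Qed.

Lemma hfun_estimate s : Rabs ((p - 1) * h s - 1) <= 2 * Rabs a / u s * h s.
Proof.
  destruct (Psi_spec p a Hp (exp (- s)) (exp_pos _)) as [Hpos HI].
  pose proof (tail_integral_approx p a Hp _ _ Hpos HI) as Hb.
  fold (psi1 p a s) in Hb. rewrite <- hfun_mul_tail_approx in Hb.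
  pose proof (tail_approx_pos p a (psi1 p a s)) as HF.
  set (F := tail_approx p a (psi1 p a s)) in *.
  replace ((p - 1) * (h s * F) - F) with (((p - 1) * h s - 1) * F) in Hb by ring.
  rewrite Rabs_mult, (Rabs_pos_eq F) in Hb by lra.
  apply (Rmult_le_reg_r F); [exact HF|]. lra.
Qed.

Lemma hfun_ge s : / (p - 1 + 2 * Rabs a / ln 2) <= h s.
Proof.
  pose proof (hfun_estimate s) as Hest. apply Rabs_le_between in Hest.
  pose proof (ell_ge_ln2 (psi1 p a s)). pose proof ln_lt_2. pose proof (Rabs_pos a).
  assert (Hh : 0 < h s) by (apply hfun_pos).
  assert (2 * Rabs a / u s <= 2 * Rabs a / ln 2)
    by (apply Rmult_le_compat_l; [lra | apply Rinv_le_contravar; lra]).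
  assert (0 <= 2 * Rabs a / ln 2) by (apply Rdiv_le_0_compat; lra).
  assert (2 * Rabs a / u s * h s <= 2 * Rabs a / ln 2 * h s) by (apply Rmult_le_compat_r; lra).
  apply (Rmult_le_reg_l (p - 1 + 2 * Rabs a / ln 2)); [lra|].
  rewrite Rinv_r by lra. lra.
Qed.

Lemma hfun_le_exp : exists k K, 0 <= k /\ forall s, h s <= exp (- s + k * u s + K).
Proof.
  exists ((p - 1) / 2 + Rabs a), (Rabs a). split; [pose proof (Rabs_pos a); lra|].
  intros s. rewrite hfun_eq. apply exp_le_exp_of_le.
  pose proof (two_ln_le_ell _ (psi1_pos s)).
  pose proof (Rabs_ln_le_lin 1 (u s) Rlt_0_1 (ell_ge_half _)) as Hln.
  rewrite ln_1, Rabs_R0, Rplus_0_l, Rmult_1_l in Hln.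
  assert (a * ln (u s) <= Rabs a * (u s + 1)).
  { eapply Rle_trans; [apply Rle_abs|]. rewrite Rabs_mult.
    apply Rmult_le_compat_l; [apply Rabs_pos | exact Hln]. }
  nra.
Qed.

Lemma s_le_ell_psi1 : exists k, 0 <= k /\ forall s, s <= k * u s.
Proof.
  destruct hfun_le_exp as [k [K [Hk Hle]]].
  set (c := / (p - 1 + 2 * Rabs a / ln 2)).
  assert (Hc : 0 < c).
  { pose proof ln_lt_2. pose proof (Rabs_pos a).
    apply Rinv_0_lt_compat. assert (0 <= 2 * Rabs a / ln 2) by (apply Rdiv_le_0_compat; lra). lra. }
  set (D := Rabs (K - ln c)).
  pose proof ln_lt_2. assert (HD : 0 <= D) by apply Rabs_pos.
  exists (k + D / ln 2).
  split; [assert (0 <= D / ln 2) by (apply Rdiv_le_0_compat; lra); lra|].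
  intros s.
  assert (Hln : ln c <= - s + k * u s + K).
  { rewrite <- (ln_exp (- s + k * u s + K)). apply ln_le; [exact Hc|].
    eapply Rle_trans; [apply hfun_ge | apply Hle]. }
  pose proof (ell_ge_ln2 (psi1 p a s)).
  assert (D <= D / ln 2 * u s).
  { replace (D / ln 2 * u s) with (D * (u s / ln 2)) by (field; lra).
    rewrite <- (Rmult_1_r D) at 1. apply Rmult_le_compat_l; [exact HD|].
    apply (Rmult_le_reg_r (ln 2)); [lra|]. field_simplify; lra. }
  assert (K - ln c <= D) by apply Rle_abs.
  rewrite Rmult_plus_distr_r. lra.
Qed.

Lemma hfun_bounded : exists B, forall s, 0 <= s -> h s <= B.
Proof.
  destruct hfun_le_exp as [k [K [Hk Hle]]].
  set (U := 4 * Rabs a / (p - 1)).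
  assert (Hexp : 0 < exp (k * U + K)) by apply exp_pos.
  assert (Hinv : 0 < 2 / (p - 1)) by (apply Rdiv_lt_0_compat; lra).
  exists (2 / (p - 1) + exp (k * U + K)). intros s Hs.
  (* For large [u s], [hfun_estimate] alone bounds [h s]; otherwise use [hfun_le_exp]. *)
  pose proof (ell_pos (psi1 p a s)).
  destruct (Rle_or_lt U (u s)) as [HU | HU].
  - pose proof (error_weight_le p a (u s) Hp (ell_pos _) HU) as Hsmall.
    pose proof (hfun_estimate s) as Hest. apply Rabs_le_between in Hest.
    assert (Hh : 0 < h s) by (apply hfun_pos).
    assert (2 * Rabs a / u s * h s <= (p - 1) / 2 * h s) by (apply Rmult_le_compat_r; lra).
    assert (h s <= 2 / (p - 1)).
    { apply (Rmult_le_reg_l ((p - 1) / 2)); [lra|].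
      replace ((p - 1) / 2 * (2 / (p - 1))) with 1 by (field; lra). lra. }
    lra.
  - assert (h s <= exp (k * U + K)).
    { eapply Rle_trans; [apply Hle|]. apply exp_le_exp_of_le.
      assert (k * u s <= k * U) by (apply Rmult_le_compat_l; lra). lra. }
    lra.
Qed.

Lemma hfun_sub_inv_le : exists C, 0 <= C /\ forall s, 0 <= s ->
  Rabs (h s - / (p - 1)) <= C / u s.
Proof.
  destruct hfun_bounded as [B HB].
  assert (HB0 : 0 < B)
    by (apply Rlt_le_trans with (h 0); [apply hfun_pos | apply HB, Rle_refl]).
  exists (2 * Rabs a * B / (p - 1)).
  split; [apply Rdiv_le_0_compat; [pose proof (Rabs_pos a); nra | lra]|].
  intros s Hs. pose proof (ell_pos (psi1 p a s)).
  replace (h s - / (p - 1)) with (((p - 1) * h s - 1) / (p - 1)) by (field; lra).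
  unfold Rdiv at 1.
  rewrite Rabs_mult, (Rabs_pos_eq (/ (p - 1))) by (apply Rlt_le, Rinv_0_lt_compat; lra).
  apply Rle_trans with (2 * Rabs a / u s * B * / (p - 1)).
  - apply Rmult_le_compat_r; [apply Rlt_le, Rinv_0_lt_compat; lra|].
    eapply Rle_trans; [apply hfun_estimate|].
    apply Rmult_le_compat_l; [|now apply HB].
    apply Rdiv_le_0_compat; [pose proof (Rabs_pos a)|]; lra.
  - right. field. lra.
Qed.

End Hfun.

(** * Ratios of logarithmic weights *)

Section LogRatio.

Variables p a c : R.
Hypotheses (Hp : 0 < p) (Hc : 0 <= c).
Variables u v : R.
Hypotheses (Hu : ln 2 <= u) (Hv : ln 2 <= v) (Hvu : v <= u + c).

Lemma log_ratio_le : ln v - ln u <= c / u.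
Proof.
  pose proof ln_lt_2. eapply Rle_trans; [apply ln_sub_ln_le; lra|].
  apply Rmult_le_compat_r; [apply Rlt_le, Rinv_0_lt_compat|]; lra.
Qed.

Lemma div_le_div_ln2 : c / u <= c / ln 2.
Proof. pose proof ln_lt_2. apply Rmult_le_compat_l; [lra | apply Rinv_le_contravar; lra]. Qed.

Lemma log_ratio_ge t : 0 < t < 1 -> u + 2 * ln t <= v -> - 4 * ln t <= u ->
  4 * (ln t / u) <= ln v - ln u.
Proof.
  intros Ht Hlow Hsmall. pose proof ln_lt_2.
  assert (ln t < 0) by (rewrite <- ln_1; apply ln_increasing; lra).
  pose proof (ln_sub_ln_le v u ltac:(lra) ltac:(lra)).
  assert ((u - v) / v <= - (4 * (ln t / u))); [|lra].
  assert (Hkey : (u - v) * u <= - 4 * ln t * v).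
  { assert (0 <= (- 2 * ln t - (u - v)) * u) by (apply Rmult_le_pos; lra).
    assert (0 <= - 2 * ln t * (2 * v - u)) by (apply Rmult_le_pos; lra).
    nra. }
  replace ((u - v) / v) with ((u - v) * u * / (u * v)) by (field; lra).
  replace (- (4 * (ln t / u))) with (- 4 * ln t * v * / (u * v)) by (field; lra).
  apply Rmult_le_compat_r; [apply Rlt_le, Rinv_0_lt_compat; nra | exact Hkey].
Qed.

Lemma log_ratio_bound_large t K : 1 <= t <= K -> u <= v ->
  Rpower t p * Rabs (exp (a * (ln v - ln u)) - 1)
  <= Rpower K p * Rabs a * c * exp (Rabs a * (c / ln 2)) / u.
Proof.
  intros Ht Huv. pose proof ln_lt_2.
  assert (Hr0 : 0 <= ln v - ln u) by (pose proof (ln_le u v ltac:(lra) Huv); lra).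
  pose proof log_ratio_le.
  assert (Hr : Rabs (ln v - ln u) <= c / u) by (rewrite Rabs_pos_eq; lra).
  pose proof (Rabs_exp_mul_sub_1_le a _ _ _ Hr div_le_div_ln2) as Hexp.
  assert (HtK : Rpower t p <= Rpower K p) by (apply Rle_Rpower_l; lra).
  replace (Rpower K p * Rabs a * c * exp (Rabs a * (c / ln 2)) / u)
    with (Rpower K p * (Rabs a * (c / u) * exp (Rabs a * (c / ln 2)))) by (field; lra).
  apply Rmult_le_compat; [apply Rlt_le, exp_pos | apply Rabs_pos | exact HtK | exact Hexp].
Qed.

Lemma log_ratio_bound_moderate t : 0 < t < 1 -> u + 2 * ln t <= v -> - 4 * ln t <= u ->
  Rpower t p * Rabs (exp (a * (ln v - ln u)) - 1)
  <= Rabs a * exp (Rabs a * (c / ln 2 + 1)) * (c + 4 / p) / u.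
Proof.
  intros Ht Hlow Hsmall. pose proof ln_lt_2.
  pose proof (log_ratio_ge t Ht Hlow Hsmall). pose proof log_ratio_le. pose proof div_le_div_ln2.
  assert (ln t / u < 0)
    by (apply Rdiv_neg_pos; [rewrite <- ln_1; apply ln_increasing | ]; lra).
  assert (- 4 * (ln t / u) <= 1).
  { apply (Rmult_le_reg_r u); [lra|].
    replace (- 4 * (ln t / u) * u) with (- 4 * ln t) by (field; lra). lra. }
  assert (0 <= c / u) by (apply Rdiv_le_0_compat; lra).
  set (rho := c / u - 4 * (ln t / u)).
  assert (Hr : Rabs (ln v - ln u) <= rho) by (apply Rabs_le; unfold rho; lra).
  assert (Hrho : rho <= c / ln 2 + 1) by (unfold rho; lra).
  eapply Rle_trans; [apply Rmult_le_compat_l;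
                     [apply Rlt_le, exp_pos | exact (Rabs_exp_mul_sub_1_le a _ _ _ Hr Hrho)]|].
  replace (Rpower t p * (Rabs a * rho * exp (Rabs a * (c / ln 2 + 1))))
    with (Rabs a * exp (Rabs a * (c / ln 2 + 1)) * (Rpower t p * (c - 4 * ln t)) / u)
    by (unfold rho; field; lra).
  apply Rmult_le_compat_r; [apply Rlt_le, Rinv_0_lt_compat; lra|].
  apply Rmult_le_compat_l; [|apply Rpower_mul_sub_ln_le; lra].
  apply Rmult_le_pos; [apply Rabs_pos | apply Rlt_le, exp_pos].
Qed.

Lemma log_ratio_bound_small t : 0 < t -> u < - 4 * ln t ->
  let d := p / (16 * (Rabs a + 1)) in
  Rpower t p * Rabs (exp (a * (ln v - ln u)) - 1)
  <= 8 * (exp (Rabs a * (d * c + 2 * (Rabs (ln d) + 1))) + 1) / p / u.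
Proof.
  intros Ht Hsmall d.
  (* [Rpower t p <= exp (- p u / 4)] beats [exp (|a| |ln v - ln u|) <= E * exp (p u / 8)]. *)
  pose proof ln_lt_2. pose proof (Rabs_pos a).
  assert (Hd : 0 < d) by (apply Rdiv_lt_0_compat; lra).
  assert (Had : Rabs a * d <= p / 16).
  { apply (Rmult_le_reg_r (16 * (Rabs a + 1))); [lra|]. unfold d. field_simplify; nra. }
  set (E := exp (Rabs a * (d * c + 2 * (Rabs (ln d) + 1)))).
  assert (HE : 0 < E) by apply exp_pos.
  assert (Hr : Rabs a * Rabs (ln v - ln u)
               <= p * u / 8 + Rabs a * (d * c + 2 * (Rabs (ln d) + 1))).
  { pose proof (Rabs_ln_le_lin d u Hd ltac:(lra)). pose proof (Rabs_ln_le_lin d v Hd ltac:(lra)).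
    assert (Rabs (ln v - ln u) <= d * (2 * u + c) + 2 * (Rabs (ln d) + 1)).
    { unfold Rminus. eapply Rle_trans; [apply Rabs_triang|]. rewrite Rabs_Ropp. nra. }
    assert (Rabs a * (2 * d * u) <= p * u / 8) by nra.
    nra. }
  assert (Hexp : Rabs (exp (a * (ln v - ln u)) - 1) <= E * exp (p * u / 8) + 1).
  { eapply Rle_trans; [apply Rabs_exp_sub_1_le_exp_abs|]. apply Rplus_le_compat_r.
    unfold E. rewrite <- exp_plus. apply exp_le_exp_of_le. rewrite Rabs_mult. lra. }
  assert (Htp : Rpower t p <= exp (- (p * u / 4))) by (apply exp_le_exp_of_le; nra).
  assert (Hdecay : exp (- (p * u / 8)) <= 8 / p / u).
  { pose proof (mul_exp_neg_le_1 (p * u / 8)).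
    apply (Rmult_le_reg_l (p * u / 8)); [nra|].
    replace (p * u / 8 * (8 / p / u)) with 1 by (field; lra). lra. }
  assert (Hsplit : exp (- (p * u / 4)) * (E * exp (p * u / 8) + 1)
                   <= (E + 1) * exp (- (p * u / 8))).
  { rewrite Rmult_plus_distr_l, Rmult_1_r, (Rmult_comm E), <- Rmult_assoc, <- exp_plus.
    replace (- (p * u / 4) + p * u / 8) with (- (p * u / 8)) by field.
    assert (exp (- (p * u / 4)) <= exp (- (p * u / 8))) by (apply exp_le_exp_of_le; nra).
    nra. }
  eapply Rle_trans;
    [apply Rmult_le_compat; [apply Rlt_le, exp_pos | apply Rabs_pos | exact Htp | exact Hexp]|].
  eapply Rle_trans; [exact Hsplit|].
  replace (8 * (E + 1) / p / u) with ((E + 1) * (8 / p / u)) by (field; lra).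
  apply Rmult_le_compat_l; [lra | exact Hdecay].
Qed.

End LogRatio.

Lemma ell_ratio_bound p a K : 0 < p -> 1 <= K ->
  exists C, 0 <= C /\ forall l t, 0 < l -> 0 < t <= K ->
  Rpower t p * Rabs (Rpower (ell (l * t)) a / Rpower (ell l) a - 1) <= C / ell l.
Proof.
  intros Hp HK. pose proof ln_lt_2. pose proof (Rabs_pos a).
  set (c := 2 * ln K).
  assert (Hc : 0 <= c) by (pose proof (ln_le 1 K ltac:(lra) HK); rewrite ln_1 in *; unfold c; lra).
  set (d := p / (16 * (Rabs a + 1))).
  set (CA := Rpower K p * Rabs a * c * exp (Rabs a * (c / ln 2))).
  set (CB := Rabs a * exp (Rabs a * (c / ln 2 + 1)) * (c + 4 / p)).
  set (CC := 8 * (exp (Rabs a * (d * c + 2 * (Rabs (ln d) + 1))) + 1) / p).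
  assert (HCA : 0 <= CA).
  { unfold CA. apply Rmult_le_pos; [|apply Rlt_le, exp_pos]. apply Rmult_le_pos; [|exact Hc].
    apply Rmult_le_pos; [apply Rlt_le, exp_pos | apply Rabs_pos]. }
  assert (HCB : 0 <= CB).
  { unfold CB. pose proof (exp_pos (Rabs a * (c / ln 2 + 1))).
    assert (0 < 4 / p) by (apply Rdiv_lt_0_compat; lra). apply Rmult_le_pos; nra. }
  assert (HCC : 0 <= CC).
  { unfold CC. pose proof (exp_pos (Rabs a * (d * c + 2 * (Rabs (ln d) + 1)))).
    apply Rdiv_le_0_compat; lra. }
  exists (CA + CB + CC). split; [lra|].
  intros l t Hl Ht. rewrite Rpower_div_Rpower.
  pose proof (ell_ge_ln2 l). pose proof (ell_ge_ln2 (l * t)).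
  pose proof (ell_mul_le_add l t K HK Hl Ht) as Hvu. change (2 * ln K) with c in Hvu.
  assert (Hmono : forall X, X <= CA + CB + CC -> X / ell l <= (CA + CB + CC) / ell l).
  { intros X HX. apply Rmult_le_compat_r; [apply Rlt_le, Rinv_0_lt_compat|]; lra. }
  destruct (Rle_or_lt 1 t) as [Ht1 | Ht1];
    [|destruct (Rle_or_lt (- 4 * ln t) (ell l)) as [Hmid | Hsmall]].
  - eapply Rle_trans; [apply (log_ratio_bound_large p a c) with (K := K); try lra|].
    + apply ell_le_ell. nra.
    + apply Hmono. fold CA. lra.
  - eapply Rle_trans; [apply (log_ratio_bound_moderate p a c); try lra|].
    + apply ell_mul_ge. lra.
    + apply Hmono. fold CB. lra.
  - eapply Rle_trans; [apply (log_ratio_bound_small p a c); lra|].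
    apply Hmono. fold d CC. lra.
Qed.

Lemma rescaled_nonlinearity_error_le p a K1 : 1 < p -> 0 < K1 ->
  exists T, 0 <= T /\ forall z s, Rabs z <= K1 -> 0 <= s ->
    Rabs (hfun p a s * Rpower (Rabs z) (p - 1) * z
            * Rpower (ln (psi1 p a s ^ 2 * z ^ 2 + 2)) a / Rpower (ln (psi1 p a s ^ 2 + 2)) a
          - Rpower (Rabs z) (p - 1) * z / (p - 1))
    <= T / ell (psi1 p a s).
Proof.
  intros Hp HK1. set (K := Rmax K1 1). pose proof ln_lt_2.
  destruct (ell_ratio_bound p a K ltac:(lra) (Rmax_r K1 1)) as [C2 [HC2 Hratio]].
  destruct (hfun_sub_inv_le p a Hp) as [C1 [HC1 Hh]].
  assert (HKp : 0 < Rpower K p) by apply exp_pos.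
  assert (0 <= C2 / ln 2) by (apply Rdiv_le_0_compat; lra).
  assert (0 <= C2 / (p - 1)) by (apply Rdiv_le_0_compat; lra).
  exists (C1 * (Rpower K p + C2 / ln 2) + C2 / (p - 1)). split; [nra|].
  intros z s Hz Hs. set (l := psi1 p a s).
  pose proof (psi1_pos p a Hp s) as Hl. fold l in Hl. pose proof (ell_ge_ln2 l).
  (* At [z = 0] the junk value [Rpower 0 (p - 1) = 1] is harmless: the factor [z] vanishes. *)
  destruct (Req_dec z 0) as [-> | Hz0].
  { match goal with |- Rabs ?e <= _ => replace e with 0 by (unfold Rdiv; ring) end.
    rewrite Rabs_R0. apply Rdiv_le_0_compat; [nra | lra]. }
  set (t := Rabs z).
  assert (Ht : 0 < t <= K).
  { split; [now apply Rabs_pos_lt | pose proof (Rmax_l K1 1); unfold t, K in *; lra]. }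
  rewrite ln_sq_mul_sq_add_2. change (ln (l ^ 2 + 2)) with (ell l). fold t.
  set (W := Rpower t (p - 1) * z). set (R := Rpower (ell (l * t)) a / Rpower (ell l) a).
  replace (hfun p a s * Rpower t (p - 1) * z * Rpower (ell (l * t)) a / Rpower (ell l) a)
    with (hfun p a s * W * R) by (unfold W, R, Rpower; field; apply Rgt_not_eq, exp_pos).
  eapply Rle_trans; [apply Rabs_mul_ratio_sub_le; lra|].
  assert (HW : Rabs W = Rpower t p) by (apply Rabs_Rpower_abs_mul, Hz0).
  rewrite HW.
  pose proof (Hh s Hs) as Hhs. pose proof (Hratio l t Hl Ht) as HR. fold R in HR.
  assert (HtK : Rpower t p <= Rpower K p) by (apply Rle_Rpower_l; lra).
  assert (C2 / ell l <= C2 / ln 2)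
    by (apply Rmult_le_compat_l; [lra | apply Rinv_le_contravar; lra]).
  assert (0 < Rpower t p) by apply exp_pos. pose proof (Rabs_pos (R - 1)).
  replace ((C1 * (Rpower K p + C2 / ln 2) + C2 / (p - 1)) / ell l)
    with (C1 / ell l * (Rpower K p + C2 / ln 2) + C2 / ell l / (p - 1)) by (field; lra).
  apply Rplus_le_compat.
  - apply Rmult_le_compat; [apply Rabs_pos | nra | exact Hhs | lra].
  - apply Rmult_le_compat_r; [apply Rlt_le, Rinv_0_lt_compat; lra | exact HR].
Qed.

Theorem lemmaA7 (p alpha K1 : R) (hp : 1 < p) (hK1 : 0 < K1) :
  exists C : R, 0 < C /\
    forall z s : R, Rabs z <= K1 -> 1 <= s ->
      Rabs (hfun p alpha s * Rpower (Rabs z) (p - 1) * z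
              * Rpower (ln (psi1 p alpha s ^ 2 * z ^ 2 + 2)) alpha
              / Rpower (ln (psi1 p alpha s ^ 2 + 2)) alpha
            - Rpower (Rabs z) (p - 1) * z / (p - 1))
      <= C / s.
Proof.
  destruct (rescaled_nonlinearity_error_le p alpha K1 hp hK1) as [T [HT Herr]].
  destruct (s_le_ell_psi1 p alpha hp) as [k [Hk Hsk]].
  exists (T * k + 1). split; [nra|].
  intros z s Hz Hs.
  pose proof (ell_pos (psi1 p alpha s)). pose proof (Hsk s).
  eapply Rle_trans; [apply Herr; lra|].
  apply (Rmult_le_reg_r (s * ell (psi1 p alpha s))); [nra|].
  replace (T / ell (psi1 p alpha s) * (s * ell (psi1 p alpha s))) with (T * s) by (field; lra).
  replace ((T * k + 1) / s * (s * ell (psi1 p alpha s))) with ((T * k + 1) * ell (psi1 p alpha s))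
    by (field; lra).
  nra.
Qed.
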